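(* Let $p$ be a prime and let $L$ be a finitely generated pro-$p$ group. Suppose that $M$ is an abelian normal subgroup of $L$ equal to the normal closure $M=\langle T^L\rangle$ of a finite set $T$ consisting of right Engel elements of $L$, and that $L/M$ is nilpotent. Then $L$ is nilpotent.
   Context: An element $g$ of a group $L$ is right Engel if for every $x\in L$ there is $n=n(g,x)$ with $[g,{}_nx]=1$, where $[y,{}_0x]=y$ and $[y,{}_{i+1}x]=[[y,{}_ix],x]$. Subgroups, normal closures and generation are in the topological (closed) sense. *)

From mathcomp Require Import all_boot all_order all_algebra.
From mathcomp Require Import all_classical all_reals all_analysis.

Set Implicit Arguments.
Unset Strict Implicit.
Unset Printing Implicit Defensive.

Local Open Scope classical_set_scope.

Section Groups.
Variables (T : Type) (mul : T -> T -> T) (inv : T -> T) (one : T).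

Definition is_group : Prop :=
  [/\ forall x y z, mul x (mul y z) = mul (mul x y) z,
      forall x, mul one x = x,
      forall x, mul x one = x,
      forall x, mul (inv x) x = one &
      forall x, mul x (inv x) = one].

Definition subgroup (H : set T) : Prop :=
  [/\ H one, forall x y, H x -> H y -> H (mul x y) & forall x, H x -> H (inv x)].

Definition normal_subgroup (H : set T) : Prop :=
  subgroup H /\ forall x g, H x -> H (mul (inv g) (mul x g)).

Definition comm (a b : T) : T := mul (mul (inv a) (inv b)) (mul a b).

Definition engel_comm (g x : T) (n : nat) : T := iter n (fun y => comm y x) g.

Definition right_engel (g : T) : Prop :=
  forall x, exists n, engel_comm g x n = one.

Definition gen (S : set T) : set T :=
  fun x => forall H, subgroup H -> S `<=` H -> H x.

Definition comm_set (A : set T) : set T :=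
  gen [set c | exists a x, A a /\ c = comm a x].

Fixpoint lcs (i : nat) : set T :=
  if i is i'.+1 then comm_set (lcs i') else setT.

(* L/M is nilpotent (M a normal subgroup): some term of the lower central
   series of L lies in M *)
Definition nilpotent_mod (M : set T) : Prop := exists c, lcs c `<=` M.

Definition nilpotent : Prop := nilpotent_mod [set one].

Definition abelian_set (A : set T) : Prop :=
  forall x y, A x -> A y -> mul x y = mul y x.

Definition has_index (H : set T) (k : nat) : Prop :=
  exists r : 'I_k -> T,
    (forall x, exists i, H (mul (inv (r i)) x)) /\
    (forall x i j, H (mul (inv (r i)) x) -> H (mul (inv (r j)) x) -> i = j).

End Groups.

Section TopGroups.
Variables (T : topologicalType) (mul : T -> T -> T) (inv : T -> T) (one : T).

Definition topological_group : Prop :=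
  [/\ is_group mul inv one,
      continuous (fun xy : T * T => mul xy.1 xy.2) &
      continuous inv].

Definition profinite : Prop :=
  [/\ topological_group, compact [set: T], hausdorff_space T &
      totally_disconnected [set: T]].

Definition pro_p (p : nat) : Prop :=
  profinite /\
  forall N : set T, open N -> normal_subgroup mul inv one N ->
    exists k, has_index mul inv N (p ^ k).

Definition topgen (S : set T) : set T :=
  fun x => forall H, closed H -> subgroup mul inv one H -> S `<=` H -> H x.

Definition topncl (S : set T) : set T :=
  fun x => forall H, closed H -> normal_subgroup mul inv one H -> S `<=` H -> H x.

Definition topologically_finitely_generated : Prop :=
  exists S : set T, finite_set S /\ topgen S = setT.

End TopGroups.

From mathcomp Require Import all_boot all_order all_algebra.
From mathcomp Require Import all_classical all_reals all_analysis.

(* Let N be the closed normal closure of a finite set G of elements that are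
   right Engel modulo a closed normal subgroup K, and assume N is abelian.  If a
   set X centralizes N modulo K, then N/K lies in a term of the upper central
   series of L/K.  For X = L this is immediate, and the claim descends from
   gamma_c(L) to gamma_(c+1)(L) by removing, one at a time, the finitely many
   topological normal generators f of gamma_c(L) modulo gamma_(c+1)(L).  To
   remove f, choose n with [g, _n f] in K for all g in G, and for j = n-1, ..., 0
   replace G by the [g, _j f] and K by the closed normal closure of K and the
   [g, _(j+1) f]: modulo the latter, f centralizes the new N.  The Engel property
   survives the replacement since in the abelian group N the commutators
   [[m, f], x] and [[m, x], f] agree modulo K as soon as [f, x] centralizes N
   modulo K.  The theorem is the case K = 1 and X = gamma_c(L), which lies in M. *)

Set Implicit Arguments.
Unset Strict Implicit.
Unset Printing Implicit Defensive.

Local Open Scope classical_set_scope.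

Lemma nat_descending_ind (P : nat -> Prop) n :
  (forall j, n <= j -> P j) -> (forall j, P j.+1 -> P j) -> P 0.
Proof.
move=> Pbig Pstep; suff: forall d j, n <= j + d -> P j by apply; rewrite add0n.
elim=> [|d IHd] j; first by rewrite addn0; apply: Pbig.
by rewrite -addSnnS => /IHd; apply: Pstep.
Qed.

Section GroupTheory.
Variables (T : Type) (mul : T -> T -> T) (inv : T -> T) (one : T).
Hypothesis groupT : is_group mul inv one.

Local Infix "*" := mul.
Local Notation "x ^-1" := (inv x).
Local Notation "[~ x , y ]" := (comm mul inv x y).
Local Notation lcs := (lcs mul inv one).
Local Notation subgroup := (subgroup mul inv one).
Local Notation normal := (normal_subgroup mul inv one).
Local Notation engel_comm := (engel_comm mul inv).

Definition cjg x g := g^-1 * (x * g).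
Local Notation "x ^ g" := (cjg x g).

Lemma mulgA x y z : x * (y * z) = x * y * z. Proof. by case: groupT. Qed.
Lemma mul1g x : one * x = x. Proof. by case: groupT. Qed.
Lemma mulg1 x : x * one = x. Proof. by case: groupT. Qed.
Lemma mulVg x : x^-1 * x = one. Proof. by case: groupT. Qed.
Lemma mulgV x : x * x^-1 = one. Proof. by case: groupT. Qed.
Lemma mulKg x y : x^-1 * (x * y) = y. Proof. by rewrite mulgA mulVg mul1g. Qed.
Lemma mulKVg x y : x * (x^-1 * y) = y. Proof. by rewrite mulgA mulgV mul1g. Qed.

Lemma invg_unique x y : x * y = one -> x^-1 = y.
Proof. by move=> xy1; rewrite -[x^-1]mulg1 -xy1 mulKg. Qed.

Lemma invgK x : x^-1^-1 = x. Proof. by apply: invg_unique; rewrite mulVg. Qed.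
Lemma invMg x y : (x * y)^-1 = y^-1 * x^-1.
Proof. by apply: invg_unique; rewrite -mulgA mulKVg mulgV. Qed.
Lemma invg1 : one^-1 = one. Proof. by apply: invg_unique; rewrite mul1g. Qed.

Ltac group_simpl :=
  rewrite /comm /cjg;
  repeat rewrite -?mulgA ?invMg ?invgK ?invg1 ?mul1g ?mulg1 ?mulVg ?mulgV ?mulKg ?mulKVg.

Lemma commgEl x y : [~ x, y] = x^-1 * x ^ y. Proof. by group_simpl. Qed.
Lemma conjg_mulR x y : x ^ y = x * [~ x, y]. Proof. by group_simpl. Qed.
Lemma comm1g y : [~ one, y] = one. Proof. by group_simpl. Qed.
Lemma commg1 x : [~ x, one] = one. Proof. by group_simpl. Qed.
Lemma commMgJ x y z : [~ x * y, z] = [~ x, z] ^ y * [~ y, z]. Proof. by group_simpl. Qed.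
Lemma commgMJ x y z : [~ x, y * z] = [~ x, z] * [~ x, y] ^ z. Proof. by group_simpl. Qed.
Lemma commVg x y : [~ x^-1, y] = ([~ x, y] ^ x^-1)^-1. Proof. by group_simpl. Qed.
Lemma commgV x y : [~ x, y^-1] = ([~ x, y] ^ y^-1)^-1. Proof. by group_simpl. Qed.
Lemma commJg x y g : [~ x ^ g, y] = [~ x, y ^ g^-1] ^ g. Proof. by group_simpl. Qed.
Lemma commgJ x y g : [~ x, y ^ g] = [~ x ^ g^-1, y] ^ g. Proof. by group_simpl. Qed.

Lemma commute_commg x y : x * y = y * x -> [~ x, y] = one.
Proof. by move=> xy; rewrite /comm xy; group_simpl. Qed.

Lemma group1 H : subgroup H -> H one. Proof. by case. Qed.
Lemma groupM H x y : subgroup H -> H x -> H y -> H (x * y).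
Proof. by case=> _ + _; apply. Qed.
Lemma groupV H x : subgroup H -> H x -> H x^-1. Proof. by case=> _ _; apply. Qed.
Lemma normal_subgroupW H : normal H -> subgroup H. Proof. by case. Qed.
Lemma normalJ H x g : normal H -> H x -> H (x ^ g). Proof. by case=> _; apply. Qed.

Lemma normal_commg H x y : normal H -> H x -> H [~ x, y].
Proof.
move=> nH Hx; have sH := normal_subgroupW nH.
by rewrite commgEl; apply: groupM sH (groupV sH Hx) (normalJ _ nH Hx).
Qed.

Lemma normal_engel_comm H x y n : normal H -> H x -> H (engel_comm x y n).
Proof. by move=> nH Hx; elim: n => //= n IHn; apply: normal_commg. Qed.

Lemma subgroup_commg_r A u : normal A -> subgroup [set y | A [~ u, y]].
Proof.
move=> nA; have sA := normal_subgroupW nA; split=> /=.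
- by rewrite commg1; apply: group1.
- by move=> y z Ay Az; rewrite commgMJ; apply: groupM sA Az (normalJ _ nA Ay).
- by move=> y Ay; rewrite commgV; apply: groupV sA (normalJ _ nA Ay).
Qed.

Lemma lcs_commg i a y : lcs i a -> lcs i.+1 [~ a, y].
Proof. by move=> la H _; apply; exists a, y. Qed.

(* [ucn A k] is the preimage of the [k]-th term of the upper central series
   of [L/A]: the [x] with [[x, y_1, ..., y_k] \in A] for all [y_i]. *)
Fixpoint ucn (A : set T) (k : nat) : set T :=
  if k is k'.+1 then [set x | forall y, ucn A k' [~ x, y]] else A.

Lemma ucn_normal A k : normal A -> normal (ucn A k).
Proof.
move=> nA; elim: k => //= k nZ; have sZ := normal_subgroupW nZ.
split; first split=> /=.
- by move=> y; rewrite comm1g; apply: group1.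
- by move=> x z Zx Zz y; rewrite commMgJ; apply: groupM sZ (normalJ _ nZ (Zx y)) (Zz y).
- by move=> x Zx y; rewrite commVg; apply: groupV sZ (normalJ _ nZ (Zx y)).
- by move=> x g Zx y; rewrite -/(cjg x g) commJg; apply: normalJ _ nZ (Zx _).
Qed.

Lemma ucnS A B k : A `<=` B -> ucn A k `<=` ucn B k.
Proof. by move=> AB; elim: k => //= k IHk x Zx y; apply: IHk. Qed.

Lemma ucn_add A a b : ucn (ucn A b) a `<=` ucn A (a + b).
Proof. by elim: a => //= a IHa x Zx y; apply: IHa. Qed.

Lemma lcs_sub_ucn A i j : normal A -> lcs i `<=` ucn A j -> lcs (i + j) `<=` A.
Proof.
move=> nA; elim: j i => [|j IHj] i; first by rewrite addn0.
move=> lcs_ucn; rewrite -addSnnS; apply: IHj => x /= lx.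
apply: (lx _ (normal_subgroupW (ucn_normal j nA))).
by move=> _ [a [y [la ->]]]; apply: lcs_ucn.
Qed.

Lemma normal_set1 : normal [set one].
Proof.
split; first split=> //=.
- by move=> x y -> ->; rewrite mul1g.
- by move=> x ->; rewrite invg1.
- by move=> x g ->; rewrite mul1g mulVg.
Qed.

Definition cent_mod (N K : set T) : set T := [set x | forall m, N m -> K [~ m, x]].

Lemma cent_mod_normal N K : normal N -> normal K -> normal (cent_mod N K).
Proof.
move=> nN nK; have sK := normal_subgroupW nK; split; first split=> /=.
- by move=> m _; rewrite commg1; apply: group1.
- move=> x y Cx Cy m Nm; rewrite commgMJ.
  exact: groupM sK (Cy m Nm) (normalJ _ nK (Cx m Nm)).
- by move=> x Cx m Nm; rewrite commgV; apply: groupV sK (normalJ _ nK (Cx m Nm)).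
- by move=> x g Cx m Nm; rewrite -/(cjg x g) commgJ; apply/(normalJ _ nK)/Cx/(normalJ _ nN).
Qed.

Lemma cent_modS N N' K K' : N' `<=` N -> K `<=` K' -> cent_mod N K `<=` cent_mod N' K'.
Proof. by move=> N'N KK' x Cx m /N'N /Cx /KK'. Qed.

Lemma normal_commuting_mod N K f :
  normal N -> normal K -> (forall m y, N m -> K [~ m, [~ f, y]]) ->
  normal (N `&` [set m | K [~ m, f]]).
Proof.
move=> nN nK Nf; have [sN sK] := (normal_subgroupW nN, normal_subgroupW nK).
split; first split=> /=.
- by split; [apply: group1 | rewrite comm1g; apply: group1].
- move=> x y [Nx Kx] [Ny Ky]; split; first exact: groupM.
  by rewrite commMgJ; apply: groupM sK (normalJ _ nK Kx) Ky.
- move=> x [Nx Kx]; split; first exact: groupV.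
  by rewrite commVg; apply: groupV sK (normalJ _ nK Kx).
- move=> x g [Nx Kx]; split; first exact: normalJ.
  rewrite /= -/(cjg x g) commJg; apply: (normalJ _ nK).
  by rewrite conjg_mulR commgMJ; apply: groupM sK (Nf _ _ Nx) (normalJ _ nK Kx).
Qed.

Lemma engel_comm_mod_le K g x n m :
  normal K -> K (engel_comm g x n) -> n <= m -> K (engel_comm g x m).
Proof.
move=> nK Kn; elim: m => [|m IHm]; first by rewrite leqn0 => /eqP <-.
by rewrite leq_eqVlt ltnS => /predU1P [<- // | /IHm /= Km]; apply: normal_commg.
Qed.

Definition eq_mod (K : set T) a b := K (a^-1 * b).

Section EqMod.
Variable K : set T.
Hypothesis nK : normal K.

Lemma eq_mod_refl a : eq_mod K a a.
Proof. by rewrite /eq_mod mulVg; apply: group1 (normal_subgroupW nK). Qed.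

Lemma eq_mod_trans a b c : eq_mod K a b -> eq_mod K b c -> eq_mod K a c.
Proof.
move=> ab bc; have := groupM (normal_subgroupW nK) ab bc.
by rewrite /eq_mod -mulgA mulKVg.
Qed.

Lemma eq_mod_memr a b : eq_mod K a b -> K b -> K a.
Proof.
move=> ab Kb; have sK := normal_subgroupW nK.
by have := groupM sK Kb (groupV sK ab); rewrite invMg invgK mulKVg.
Qed.

Lemma eq_mod_mulr a e : K e -> eq_mod K (a * e) a.
Proof.
move=> Ke; rewrite /eq_mod invMg -mulgA mulVg mulg1.
exact: groupV (normal_subgroupW nK) Ke.
Qed.

End EqMod.

Section AbelianNormal.
Variables (N K : set T).
Hypotheses (nN : normal N) (abelN : abelian_set mul N) (nK : normal K).

Lemma commMg_abelian a b y : N a -> N b -> [~ a * b, y] = [~ a, y] * [~ b, y].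
Proof.
move=> Na Nb; rewrite commMgJ; congr (_ * _).
by rewrite /cjg (abelN (normal_commg y nN Na) Nb) mulKg.
Qed.

Lemma eq_mod_commg a b y : N a -> N b -> eq_mod K a b -> eq_mod K [~ a, y] [~ b, y].
Proof.
move=> Na Nb Kab; have NVa := groupV (normal_subgroupW nN) Na; rewrite /eq_mod.
have -> : [~ a, y]^-1 = [~ a^-1, y].
  by apply: invg_unique; rewrite -commMg_abelian // mulgV comm1g.
by rewrite -commMg_abelian //; apply: normal_commg.
Qed.

Variables f x : T.
Hypothesis centNfx : forall u, N u -> K [~ u, [~ f, x]].

(* In the abelian group [N] the two sides differ by [[m ^ (x * f), [f, x]]]. *)
Lemma commg_swap_mod m : N m -> eq_mod K [~ [~ m, f], x] [~ [~ m, x], f].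
Proof.
move=> Nm; have sN := normal_subgroupW nN.
have NVJ g : N (m ^ g)^-1 by apply: groupV sN (normalJ _ nN Nm).
have swap : (m ^ f)^-1 * (m * (m ^ x)^-1) = (m ^ x)^-1 * (m * (m ^ f)^-1).
  rewrite (abelN (NVJ f) (groupM sN Nm (NVJ x))) -mulgA (abelN (NVJ x) (NVJ f)).
  by rewrite (abelN (NVJ x) (groupM sN Nm (NVJ f))) -mulgA.
have -> : [~ [~ m, f], x] = [~ [~ m, x], f] * [~ m ^ (x * f), [~ f, x]].
  transitivity ((m ^ f)^-1 * (m * (m ^ x)^-1) * m ^ (f * x)); first by group_simpl.
  by rewrite swap; group_simpl.
by apply: (eq_mod_mulr nK); apply: centNfx; apply: normalJ _ nN Nm.
Qed.

Lemma commg_engel_comm_swap_mod j m :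
  N m -> eq_mod K [~ engel_comm m f j, x] (engel_comm [~ m, x] f j).
Proof.
elim: j m => [|j IHj] m Nm /=; first exact: eq_mod_refl.
have Nmj := normal_engel_comm f j nN Nm.
apply: (eq_mod_trans nK (commg_swap_mod Nmj)).
apply: eq_mod_commg (IHj m Nm); first exact: normal_commg x nN Nmj.
exact: normal_engel_comm f j nN (normal_commg x nN Nm).
Qed.

Lemma engel_comm_swap_mod j r m : N m ->
  eq_mod K (engel_comm (engel_comm m f j) x r) (engel_comm (engel_comm m x r) f j).
Proof.
elim: r m => [|r IHr] m Nm /=; first exact: eq_mod_refl.
have Nmr := normal_engel_comm x r nN Nm.
apply: (eq_mod_trans nK _ (commg_engel_comm_swap_mod j Nmr)).
apply: eq_mod_commg (IHr m Nm).
  exact: normal_engel_comm x r nN (normal_engel_comm f j nN Nm).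
exact: normal_engel_comm f j nN Nmr.
Qed.

Lemma engel_comm_mod_transfer j r m :
  N m -> K (engel_comm m x r) -> K (engel_comm (engel_comm m f j) x r).
Proof.
move=> Nm Kmr; apply: (eq_mod_memr nK (engel_comm_swap_mod j r Nm)).
exact: normal_engel_comm f j nK Kmr.
Qed.

End AbelianNormal.

End GroupTheory.

Section TopologicalGroup.
Variables (T : topologicalType) (mul : T -> T -> T) (inv : T -> T) (one : T).
Hypothesis groupT : is_group mul inv one.
Hypothesis mul_cont : continuous (fun xy : T * T => mul xy.1 xy.2).
Hypothesis inv_cont : continuous inv.

Local Infix "*" := mul.
Local Notation "[~ x , y ]" := (comm mul inv x y).
Local Notation lcs := (lcs mul inv one).
Local Notation subgroup := (subgroup mul inv one).
Local Notation normal := (normal_subgroup mul inv one).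
Local Notation engel_comm := (engel_comm mul inv).
Local Notation topncl := (topncl mul inv one).
Local Notation ucn := (ucn mul inv).
Local Notation cent_mod := (cent_mod mul inv).

Lemma continuousM (f g : T -> T) :
  continuous f -> continuous g -> continuous (fun x => f x * g x).
Proof.
move=> cf cg x.
have fg : {for x, continuous (fun x => (f x, g x))} by exact: cvg_pair (cf x) (cg x).
by have := continuous_comp fg (@mul_cont (f x, g x)).
Qed.

Lemma continuousV (f : T -> T) : continuous f -> continuous (fun x => inv (f x)).
Proof. by move=> cf x; have := continuous_comp (cf x) (@inv_cont (f x)). Qed.

Lemma continuous_commg_l y : continuous (fun x => [~ x, y]).
Proof.
have cid : continuous (fun x : T => x) by move=> ?; apply: cvg_id.
rewrite /comm; apply: continuousM; apply: continuousM;
  do ?apply: continuousV; by [exact: cid | exact: cst_continuous].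
Qed.

Lemma continuous_commg_r x : continuous (fun y => [~ x, y]).
Proof.
have cid : continuous (fun y : T => y) by move=> ?; apply: cvg_id.
rewrite /comm; apply: continuousM; apply: continuousM;
  do ?apply: continuousV; by [exact: cid | exact: cst_continuous].
Qed.

Lemma closed_forall (I : Type) (A : I -> set T) :
  (forall i, closed (A i)) -> closed [set x | forall i, A i x].
Proof.
move=> cA; rewrite (_ : [set x | _] = \bigcap_i A i); first exact: closed_bigI.
by apply/seteqP; split=> x /= Ax i //; apply: Ax.
Qed.

Lemma closed_commg_l A y : closed A -> closed [set x | A [~ x, y]].
Proof. by have := (continuous_closedP _).1 (continuous_commg_l (y:=y)) A. Qed.

Lemma closed_commg_r A x : closed A -> closed [set y | A [~ x, y]].
Proof. by have := (continuous_closedP _).1 (continuous_commg_r (x:=x)) A. Qed.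

Lemma ucn_closed A k : closed A -> closed (ucn A k).
Proof. by move=> cA; elim: k => //= k cZ; apply: closed_forall => y; apply: closed_commg_l. Qed.

Lemma cent_mod_closed N K : closed K -> closed (cent_mod N K).
Proof. by move=> cK; apply: closed_bigI => m _; apply: closed_commg_r. Qed.

Lemma topncl_closed A : closed (topncl A).
Proof.
rewrite (_ : topncl A = \bigcap_(H in [set H | [/\ closed H, normal H & A `<=` H]]) H).
  by apply: closed_bigI => H [].
apply/seteqP; split=> x Ax H; first by case; apply: Ax.
by move=> cH nH AH; apply: Ax.
Qed.

Lemma topncl_normal A : normal (topncl A).
Proof.
split; first split.
- by move=> H _ nH _; apply: group1 (normal_subgroupW nH).
- move=> x y Ax Ay H cH nH AH.
  exact: groupM (normal_subgroupW nH) (Ax H cH nH AH) (Ay H cH nH AH).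
- by move=> x Ax H cH nH AH; apply: groupV (normal_subgroupW nH) (Ax H cH nH AH).
- by move=> x g Ax H cH nH AH; apply: (normalJ g nH (Ax H cH nH AH)).
Qed.

Lemma sub_topncl A : A `<=` topncl A.
Proof. by move=> x Ax H _ _; apply. Qed.

Lemma topncl_min A H : closed H -> normal H -> A `<=` H -> topncl A `<=` H.
Proof. by move=> cH nH AH x; apply. Qed.

Lemma topnclS A B : A `<=` B -> topncl A `<=` topncl B.
Proof.
move=> AB; apply: topncl_min; [exact: topncl_closed | exact: topncl_normal |].
by move=> x /AB; apply: sub_topncl.
Qed.

Definition engel_mod (G : seq T) (K : set T) : Prop :=
  forall g, g \in G -> forall x, exists n, K (engel_comm g x n).

Lemma engel_mod_uniform K G f :
  normal K -> engel_mod G K -> exists n, forall g, g \in G -> K (engel_comm g f n).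
Proof.
move=> nK; elim: G => [|g G IHG] engelG; first by exists 0.
have [n1 Kg] := engelG g (mem_head _ _) f.
have [n2 KG] : exists n, forall h, h \in G -> K (engel_comm h f n).
  by apply: IHG => h Gh; apply: engelG; rewrite inE Gh orbT.
exists (maxn n1 n2) => h; rewrite inE => /predU1P [-> | Gh].
- exact: (engel_comm_mod_le groupT nK Kg (leq_maxl _ _)).
- exact: (engel_comm_mod_le groupT nK (KG h Gh) (leq_maxr _ _)).
Qed.


Definition ncl_mod (G : seq T) (K : set T) : set T := topncl ([set` G] `|` K).

Lemma mem_ncl_mod G K g : g \in G -> ncl_mod G K g.
Proof. by move=> Gg; apply: sub_topncl; left. Qed.

Lemma sub_ncl_mod G K : K `<=` ncl_mod G K.
Proof. by move=> x Kx; apply: sub_topncl; right. Qed.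

Lemma ncl_mod_min G K H : closed H -> normal H ->
  (forall g, g \in G -> H g) -> K `<=` H -> ncl_mod G K `<=` H.
Proof. by move=> cH nH GH KH; apply: topncl_min => // x [/GH | /KH]. Qed.

Definition ucn_bounded (X : set T) : Prop :=
  forall K (G : seq T), closed K -> normal K ->
    abelian_set mul (ncl_mod G K) -> engel_mod G K ->
    X `<=` cent_mod (ncl_mod G K) K -> exists k, ncl_mod G K `<=` ucn K k.

Lemma ucn_bounded_setT : ucn_bounded setT.
Proof. by move=> K G _ _ _ _ TC; exists 1 => m Nm y; apply: TC. Qed.

Lemma ucn_bounded_topncl X Y : X `<=` topncl Y -> ucn_bounded X -> ucn_bounded Y.
Proof.
move=> XY bX K G cK nK abN eG YC; apply: bX => //.
apply: subset_trans XY _; apply: topncl_min YC.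
- exact: cent_mod_closed.
- exact: (cent_mod_normal groupT (topncl_normal _) nK).
Qed.

Lemma ucn_boundedS X Y : X `<=` Y -> ucn_bounded X -> ucn_bounded Y.
Proof. by move=> XY; apply: ucn_bounded_topncl => x /XY; apply: sub_topncl. Qed.

Section DropGenerator.
Variables (X : set T) (f : T).
Hypothesis X_commf : forall x, X [~ f, x].
Hypothesis bounded_fX : ucn_bounded (f |` X).
Variables (K : set T) (G : seq T).
Hypotheses (closedK : closed K) (normalK : normal K).
Hypotheses (abelN : abelian_set mul (ncl_mod G K)) (engelG : engel_mod G K).
Hypothesis X_centN : X `<=` cent_mod (ncl_mod G K) K.

Local Notation N := (ncl_mod G K).
Local Notation Gf j := [seq engel_comm g f j | g <- G].
Local Notation Nf j := (ncl_mod (Gf j) K).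

Lemma commf_mod x u : N u -> K [~ u, [~ f, x]].
Proof. exact: X_centN (X_commf x) u. Qed.

Lemma engel_comm_Gf g j : g \in G -> N (engel_comm g f j).
Proof.
by move=> Gg; apply: (normal_engel_comm groupT f j (topncl_normal _)); apply: mem_ncl_mod.
Qed.

Lemma ncl_mod_Gf_sub j K' : K' `<=` N -> ncl_mod (Gf j) K' `<=` N.
Proof.
move=> K'N; apply: ncl_mod_min K'N; [exact: topncl_closed | exact: topncl_normal |].
by move=> _ /mapP [g Gg ->]; apply: engel_comm_Gf.
Qed.

Lemma Nf_sub j : Nf j `<=` N.
Proof. by apply: ncl_mod_Gf_sub; apply: sub_ncl_mod. Qed.

(* On generators, [[g, _j f], f] = [g, _(j+1) f] lies in [Nf j.+1]; and the [m]
   of [N] with [[m, f] \in Nf j.+1] form a closed normal subgroup because every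
   [[f, y]] centralizes [N] modulo [K]. *)
Lemma cent_mod_Gf j : cent_mod (ncl_mod (Gf j) (Nf j.+1)) (Nf j.+1) f.
Proof.
have cK' : closed (Nf j.+1) by apply: topncl_closed.
have nK' : normal (Nf j.+1) := topncl_normal _.
pose Z := N `&` [set m | Nf j.+1 [~ m, f]].
suff: ncl_mod (Gf j) (Nf j.+1) `<=` Z by move=> NZ m /NZ [].
apply: ncl_mod_min.
- by apply: closedI; [apply: topncl_closed | apply: closed_commg_l].
- apply: (normal_commuting_mod groupT (topncl_normal _) nK') => m y Nm.
  exact: sub_ncl_mod (commf_mod y Nm).
- move=> _ /mapP [g Gg ->]; split; first exact: engel_comm_Gf.
  by apply: mem_ncl_mod; apply/mapP; exists g.
- move=> k K'k; split; first exact: Nf_sub K'k.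
  exact: (normal_commg groupT f nK' K'k).
Qed.

Lemma engel_mod_Gf j : engel_mod (Gf j) (Nf j.+1).
Proof.
move=> _ /mapP [g Gg ->] x; have [r Kgr] := engelG Gg x; exists r.
apply: sub_ncl_mod; apply: (engel_comm_mod_transfer groupT (topncl_normal _) abelN normalK).
- exact: commf_mod.
- exact: mem_ncl_mod.
- exact: Kgr.
Qed.

Lemma ucn_bounded_Gf_step j :
  (exists k, Nf j.+1 `<=` ucn K k) -> exists k, Nf j `<=` ucn K k.
Proof.
move=> [k1 K'k1]; set K' := Nf j.+1; set N' := ncl_mod (Gf j) K'.
have KK' : K `<=` K' by apply: sub_ncl_mod.
have N'N : N' `<=` N by apply: ncl_mod_Gf_sub; apply: Nf_sub.
have [k2 N'k2] : exists k, N' `<=` ucn K' k.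
  apply: bounded_fX; [apply: topncl_closed | apply: topncl_normal | | exact: engel_mod_Gf |].
  - by move=> a b /N'N Na /N'N Nb; apply: abelN.
  - move=> y [-> | Xy]; first exact: cent_mod_Gf.
    exact: cent_modS N'N KK' y (X_centN Xy).
have NfN' : Nf j `<=` N' by apply: topnclS => z [Gz | Kz]; [left | right; apply: KK'].
exists (k2 + k1) => y Nfy; apply: ucn_add.
by apply: (ucnS K'k1); apply: N'k2; apply: NfN'.
Qed.

Lemma ncl_mod_Gf_large : exists n, forall j, n <= j -> Nf j `<=` K.
Proof.
have [n KGn] := engel_mod_uniform f normalK engelG; exists n => j nj.
apply: ncl_mod_min closedK normalK _ (@subset_refl _ K).
by move=> _ /mapP [g Gg ->]; apply: (engel_comm_mod_le groupT normalK (KGn g Gg) nj).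
Qed.

Lemma ncl_mod_ucn_bounded : exists k, N `<=` ucn K k.
Proof.
have [n Nf_large] := ncl_mod_Gf_large.
have : exists k, Nf 0 `<=` ucn K k.
  apply: (@nat_descending_ind (fun j => exists k, Nf j `<=` ucn K k) n).
  - by move=> j nj; exists 0; apply: Nf_large.
  - exact: ucn_bounded_Gf_step.
by rewrite map_id.
Qed.

End DropGenerator.

Lemma ucn_bounded_drop X f :
  (forall x, X [~ f, x]) -> ucn_bounded (f |` X) -> ucn_bounded X.
Proof. by move=> Xf bfX K G; apply: ncl_mod_ucn_bounded. Qed.

Lemma ucn_bounded_drop_seq X (F : seq T) :
  (forall f x, f \in F -> X [~ f, x]) -> ucn_bounded ([set` F] `|` X) -> ucn_bounded X.
Proof.
elim: F => [|f F IHF] FX bF; first by rewrite set_nil set0U in bF.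
apply: IHF => [g x Fg | ]; first by apply: FX; rewrite inE Fg orbT.
apply: (ucn_bounded_drop (f := f)) => [x | ]; first by right; apply: FX; rewrite inE eqxx.
apply: ucn_boundedS bF => y [/= | Xy]; last by right; right.
by rewrite inE => /predU1P [-> | Fy]; [left | right; left].
Qed.

Section FiniteGeneration.
Variable gens : seq T.
Hypothesis gensT : topgen mul inv one [set` gens] = setT.

Lemma closed_subgroup_gens H :
  closed H -> subgroup H -> (forall s, s \in gens -> H s) -> forall x, H x.
Proof.
move=> cH sH gH x; have : topgen mul inv one [set` gens] x by rewrite gensT.
by apply.
Qed.

Fixpoint gen_comms (k : nat) (u : T) : seq T :=
  if k is k'.+1 then flatten [seq gen_comms k' [~ u, s] | s <- gens] else [:: u].

Lemma lcs_gen_comms i k u w : lcs i u -> w \in gen_comms k u -> lcs (i + k) w.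
Proof.
elim: k i u => [|k IHk] i u lu /=; first by rewrite addn0 inE => /eqP ->.
by case/flatten_mapP => s _ /(IHk _ _ (lcs_commg s lu)); rewrite addSnnS.
Qed.

Lemma ucn_gen_comms A k u : closed A -> normal A ->
  (forall w, w \in gen_comms k u -> A w) -> ucn A k u.
Proof.
move=> cA nA; elim: k u => [|k IHk] u /= Au; first by apply: Au; rewrite inE.
apply: closed_subgroup_gens => [|| s gs].
- by apply: closed_commg_r; apply: ucn_closed.
- exact: (subgroup_commg_r groupT u (ucn_normal groupT k nA)).
- by apply: IHk => w wus; apply: Au; apply/flatten_mapP; exists s.
Qed.

Definition lcs_gens (c : nat) : seq T := flatten [seq gen_comms c s | s <- gens].

Lemma lcs_gens_lcs c w : w \in lcs_gens c -> lcs c w.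
Proof. by case/flatten_mapP => s _; apply: (lcs_gen_comms (i := 0)). Qed.

Lemma lcs_sub_topncl_gens c : lcs c `<=` topncl [set` lcs_gens c].
Proof.
set A := topncl _; have nA : normal A := topncl_normal _.
have ucnA : forall x, ucn A c x.
  apply: closed_subgroup_gens => [|| s gs].
  - by apply: ucn_closed; apply: topncl_closed.
  - exact: normal_subgroupW (ucn_normal groupT c nA).
  - apply: ucn_gen_comms => [|// | w ws]; first exact: topncl_closed.
    by apply: sub_topncl; apply/flatten_mapP; exists s.
by have := lcs_sub_ucn groupT (i := 0) nA (fun x _ => ucnA x).
Qed.

Lemma ucn_bounded_lcs c : ucn_bounded (lcs c).
Proof.
elim: c => [|c IHc]; first exact: ucn_bounded_setT.
apply: (ucn_bounded_drop_seq (F := lcs_gens c)).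
  by move=> f x /lcs_gens_lcs /(lcs_commg x).
apply: ucn_bounded_topncl IHc => x /lcs_sub_topncl_gens.
by apply: topnclS => y; left.
Qed.

Theorem nilpotent_of_abelian_engel_ncl (E : seq T) :
  hausdorff_space T -> (forall g, g \in E -> right_engel mul inv one g) ->
  abelian_set mul (topncl [set` E]) -> nilpotent_mod mul inv one (topncl [set` E]) ->
  nilpotent mul inv one.
Proof.
move=> hausT engelE abelM [c lcsM].
have closed1 : closed [set one] by apply/accessible_closed_set1/hausdorff_accessible.
have normal1 := normal_set1 groupT.
have NM : ncl_mod E [set one] `<=` topncl [set` E].
  apply: ncl_mod_min; [exact: topncl_closed | exact: topncl_normal | exact: sub_topncl |].
  by move=> _ ->; apply: group1 (normal_subgroupW (topncl_normal _)).
have MN : topncl [set` E] `<=` ncl_mod E [set one] by apply: topnclS => x; left.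
have [k Nk] : exists k, ncl_mod E [set one] `<=` ucn [set one] k.
  apply: (ucn_bounded_lcs (c := c) (G := E) closed1 normal1).
  - by move=> x y /NM Mx /NM My; apply: abelM.
  - by move=> g Eg x; have [n gn1] := engelE g Eg x; exists n.
  - by move=> y /lcsM My m /NM Mm; apply: (commute_commg groupT); apply: abelM.
by exists (c + k); apply: (lcs_sub_ucn groupT normal1) => y /lcsM /MN /Nk.
Qed.

End FiniteGeneration.

End TopologicalGroup.

Theorem lemma3p3 (p : nat) (T : topologicalType)
    (mul : T -> T -> T) (inv : T -> T) (one : T) (Tset : set T) :
  prime p ->
  pro_p mul inv one p ->
  topologically_finitely_generated mul inv one ->
  finite_set Tset ->
  (forall g, Tset g -> right_engel mul inv one g) ->
  abelian_set mul (topncl mul inv one Tset) ->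
  nilpotent_mod mul inv one (topncl mul inv one Tset) ->
  nilpotent mul inv one.
Proof.
move=> _ [[[groupT mul_cont inv_cont] _ hausT _] _] [S [finS genS]] finT.
have [gens gensE] := (finite_seqP S).1 finS; rewrite gensE in genS.
have [E ->] := (finite_seqP Tset).1 finT => engelE.
apply: (nilpotent_of_abelian_engel_ncl groupT mul_cont inv_cont genS hausT) => g Eg.
exact: engelE.
Qed.
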